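(* In the setting described in the context, for all $h$ with $0<h<\varepsilon$, $h\le h_0$, and $c_2\varepsilon<\delta$ (where $c_2=\frac\pi2+c_1$), the discrete problem: find $u_h\in\widetilde V_h$ such that $a_h(u_h,v_h)=l_h(v_h)$ for all $v_h\in\widetilde V_h$, has a unique solution.
   Context: Let $n\in\{1,2\}$ and $\Gamma\subset\mathbb R^{n+1}$ a smooth, connected, compact, orientable hypersurface without boundary with unit outer normal $\nu$; let $\widehat p(x)=x-d(x)\nabla d(x)$ denote the closest point projection onto $\Gamma$, $d$ the signed distance function, defined on a neighbourhood of $\Gamma$. Tangential derivatives: $\nabla_\Gamma\eta=(\underline D_1\eta,\dots,\underline D_{n+1}\eta)=\nabla\bar\eta-(\nabla\bar\eta\cdot\nu)\nu$ for any extension $\bar\eta$. Coefficients: $a_{ij}\in C^2(\Gamma)$, $A=(a_{ij})$ symmetric, $\sum_{i,j}a_{ij}(x)\xi_i\nu_j(x)=0$ and $\sum_{i,j}a_{ij}(x)\xi_i\xi_j\ge\alpha|\xi|^2$ for all $\xi\in T_x\Gamma$ (some $\alpha>0$), and $A(x)\nu(x)=\nu(x)$; $a_0,f\in W^{1,\infty}(\Gamma)$ with $a_0\ge\alpha_0>0$. $\Omega$ is a bounded polyhedral open neighbourhood of $\Gamma$ on which $\widehat p$ is defined, $\phi:\overline\Omega\to\mathbb R$ smooth with $\Gamma=\{\phi=0\}$ and $c_0\le|\nabla\phi|\le c_1$ on $\overline\Omega$, $0<c_0\le c_1$; $U_r=\{x\in\Omega:|\phi(x)|<r\}$. $\delta>0$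 is such that for every $p\in\Gamma$ the ODE $\gamma_p'(s)=\frac{A(p)\nabla\phi(\gamma_p(s))}{A(p)\nabla\phi(\gamma_p(s))\cdot\nabla\phi(\gamma_p(s))}$, $\gamma_p(0)=p$, has a unique solution on $(-\delta,\delta)$ and $(p,s)\mapsto\gamma_p(s)$ is a bijection of $\Gamma\times(-\delta,\delta)$ onto $U_\delta$. Quadrature: an integer $q\ge0$ and a rule on the reference simplex with weights $\omega_i>0$, $\sum_{i=1}^L\omega_i=1$, points $\widehat b_i$, exact for polynomials of degree $\le q$; on a simplex $T$, $Q_T(g)=|T|\sum_{i=1}^L\omega_ig(b_{i,T})$, $b_{i,T}=\Phi_T(\widehat b_i)$ with $\Phi_T$ the affine map from the reference simplex onto $T$. $\sigma(r)=\cos^{2(q+1)}(r)$ for $|r|\le\pi/2$, $\sigma(r)=0$ otherwise; $\varrho(x)=\sigma(\phi(x)/\varepsilon)$. $\mathcal T_h$ is a regular simplicial partition of $\overline\Omega$ with mesh size $h$; $I_h$ is the Lagrange interpolation onto continuous piecewise affine functions on $\mathcal T_h$; $h_0>0$ is such that $\frac{c_0}{2}\le|\nabla I_h\phi|\le 2c_1$ on $\overline\Omega$ for all $h\in(0,h_0]$. For $h<\varepsilon$: $\widetilde{\mathcal T}_h=\{T\in\mathcal T_h:|\phi(b_{i,T})|\le\varepsilon\arccos(h/\varepsilon)\ \forall i\}$, $D_h=\bigcup_{T\in\widetilde{\mathcal T}_h}T$, $\widetilde V_h=\{v\in C(D_h): v \text{ affine on each } T\in\widetilde{\mathcal T}_h\}$.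 With $\widehat A=A\circ\widehat p$, $\widehat a_0=a_0\circ\widehat p$, $\widehat f=f\circ\widehat p$ (interpolated nodewise on $D_h$): $a_h(v_1,v_2)=\varepsilon^{-1}\sum_{T\in\widetilde{\mathcal T}_h}Q_T\bigl[\varrho\, I_h\widehat A\,\nabla v_1\cdot\nabla v_2+\varrho\, I_h\widehat a_0\,v_1v_2\bigr]\,|\nabla I_h\phi_{|T}|$ and $l_h(v)=\varepsilon^{-1}\sum_{T\in\widetilde{\mathcal T}_h}Q_T\bigl[\varrho\, I_h\widehat f\,v\bigr]\,|\nabla I_h\phi_{|T}|$. *)

From HB Require Import structures.
From mathcomp Require Import all_boot all_order all_algebra.
From mathcomp Require Import all_classical all_reals all_analysis.
Set Implicit Arguments. Unset Strict Implicit. Unset Printing Implicit Defensive.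
Import Order.TTheory GRing.Theory Num.Theory.
Import numFieldNormedType.Exports.
Local Open Scope classical_set_scope.
Local Open Scope ring_scope.

Section FEM.
Variables (R : realType) (n : nat).

Definition pt := 'rV[R]_(n.+1).

Definition dotv (u v : pt) : R := \sum_(i < n.+1) u 0 i * v 0 i.
Definition enorm (u : pt) : R := Num.sqrt (dotv u u).

Definition grad (g : pt -> R) (x : pt) : pt :=
  \row_(j < n.+1) ('D_(delta_mx 0 j : pt) g x).

Fixpoint Ck (k : nat) (U : set pt) (g : pt -> R) : Prop :=
  match k with
  | 0 => forall x, U x -> {for x, continuous g}
  | k'.+1 => (forall x, U x -> differentiable g x) /\
             forall v : pt, Ck k' U (fun x => 'D_v g x)
  end.

Definition smooth_on (U : set pt) (g : pt -> R) := forall k, Ck k U g.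

Definition Ck_on_set (k : nat) (G : set pt) (g : pt -> R) :=
  exists (U : set pt) (gbar : pt -> R),
    open U /\ G `<=` U /\ Ck k U gbar /\ forall x, G x -> gbar x = g x.

(* Lipschitz on G (= W^{1,oo}(G) on a smooth compact hypersurface) *)
Definition lipschitz_set (G : set pt) (g : pt -> R) :=
  exists k : R, forall x y, G x -> G y -> `|g x - g y| <= k * enorm (x - y).

Definition simplex := 'M[R]_(n.+2, n.+1).

Definition vert (T : simplex) (k : 'I_(n.+2)) : pt := row k T.

Definition shull (T : simplex) : set pt :=
  [set x | exists lam : 'rV[R]_(n.+2),
      (forall k, 0 <= lam 0 k) /\ \sum_k lam 0 k = 1 /\ x = lam *m T].

Definition edges (T : simplex) : 'M[R]_(n.+1) :=
  \matrix_(i < n.+1, j < n.+1) (T (lift ord0 i) j - T ord0 j).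

Definition nondeg (T : simplex) := \det (edges T) != 0.

Definition svol (T : simplex) : R := `|\det (edges T)| / (n.+1)`!%:R.

Definition sdiam (T : simplex) : R :=
  \big[Num.max/0]_(k < n.+2) \big[Num.max/0]_(l < n.+2) enorm (vert T k - vert T l).

(* gradient of the affine function on T with vertex values vals *)
Definition agrad (T : simplex) (vals : 'I_(n.+2) -> R) : pt :=
  (invmx (edges T) *m \col_(i < n.+1) (vals (lift ord0 i) - vals ord0))^T.

Definition partition_of (K : set pt) (M : seq simplex) :=
  (forall T, T \in M -> nondeg T) /\
  (forall x, K x <-> exists2 T, T \in M & shull T x) /\
  (forall i j, (i < size M)%N -> (j < size M)%N -> i <> j ->
     let T1 := nth 0 M i in let T2 := nth 0 M j in
     (exists k, forall l, vert T1 k <> vert T2 l) /\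
     (shull T1 `&` shull T2 =
        [set x | exists lam : 'rV[R]_(n.+2),
           (forall k, 0 <= lam 0 k) /\ \sum_k lam 0 k = 1 /\
           (forall k, (forall l, vert T1 k <> vert T2 l) -> lam 0 k = 0) /\
           x = lam *m T1])).

Definition meshsize (M : seq simplex) : R := \big[Num.max/0]_(T <- M) sdiam T.

Definition bary (b : pt) : 'rV[R]_(n.+2) :=
  \row_(k < n.+2) match unlift ord0 k with
                  | Some j => b 0 j
                  | None => 1 - \sum_(j < n.+1) b 0 j
                  end.

Definition qpoint (T : simplex) (b : pt) : pt := bary b *m T.

Definition ref_simplex (b : pt) := (forall j, 0 <= b 0 j) /\ \sum_j b 0 j <= 1.

(* exactness for polynomials of degree <= q:
   (1/|T^|) int_{T^} x^alpha = (n+1)! prod alpha_j! / (|alpha| + n + 1)! *)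
Definition quad_exact (q L : nat) (omega : 'I_L -> R) (bh : 'I_L -> pt) :=
  forall alpha : 'I_(n.+1) -> nat, (\sum_j alpha j <= q)%N ->
    \sum_(i < L) omega i * \prod_(j < n.+1) (bh i 0 j) ^+ alpha j =
    ((n.+1)`! * \prod_(j < n.+1) (alpha j)`!)%:R
      / ((\sum_j alpha j + n.+1)`!)%:R.

Definition sigma (q : nat) (r : R) : R :=
  if `|r| <= pi / 2 then cos r ^+ (2 * q.+1) else 0.

Definition Ttilde (eps h : R) (phi : pt -> R) (L : nat) (bh : 'I_L -> pt)
  (M : seq simplex) : seq simplex :=
  [seq T <- M | [forall i : 'I_L, `|phi (qpoint T (bh i))| <= eps * acos (h / eps)]].

Definition Dh (Tt : seq simplex) : set pt := [set x | exists2 T, T \in Tt & shull T x].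

Definition affine_on (T : simplex) (v : pt -> R) :=
  forall lam : 'rV[R]_(n.+2), (forall k, 0 <= lam 0 k) -> \sum_k lam 0 k = 1 ->
    v (lam *m T) = \sum_k lam 0 k * v (vert T k).

Definition inVh (Tt : seq simplex) (v : pt -> R) := forall T, T \in Tt -> affine_on T v.

(* discrete forms; Ahat = A o phat, a0hat = a0 o phat, fhat = f o phat *)
Definition ah (q L : nat) (omega : 'I_L -> R) (bh : 'I_L -> pt) (eps : R)
  (phi : pt -> R) (Ahat : pt -> 'M[R]_(n.+1)) (a0hat : pt -> R)
  (Tt : seq simplex) (v1 v2 : pt -> R) : R :=
  eps^-1 * \sum_(T <- Tt)
    (svol T * \sum_(i < L) omega i *
       (let b := qpoint T (bh i) in
        let lam := bary (bh i) in
        let IA := \sum_(k < n.+2) lam 0 k *: Ahat (vert T k) in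
        let Ia0 := \sum_(k < n.+2) lam 0 k * a0hat (vert T k) in
        let g1 := agrad T (fun k => v1 (vert T k)) in
        let g2 := agrad T (fun k => v2 (vert T k)) in
        sigma q (phi b / eps) * dotv (g1 *m IA^T) g2
        + sigma q (phi b / eps) * Ia0 * v1 b * v2 b))
    * enorm (agrad T (fun k => phi (vert T k))).

Definition lh (q L : nat) (omega : 'I_L -> R) (bh : 'I_L -> pt) (eps : R)
  (phi : pt -> R) (fhat : pt -> R) (Tt : seq simplex) (v : pt -> R) : R :=
  eps^-1 * \sum_(T <- Tt)
    (svol T * \sum_(i < L) omega i *
       (let b := qpoint T (bh i) in
        let lam := bary (bh i) in
        let If := \sum_(k < n.+2) lam 0 k * fhat (vert T k) in
        sigma q (phi b / eps) * If * v b))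
    * enorm (agrad T (fun k => phi (vert T k))).

End FEM.

From HB Require Import structures.
From mathcomp Require Import all_boot all_order all_algebra.
From mathcomp Require Import all_classical all_reals all_analysis.
From mathcomp Require Import ring.
Set Implicit Arguments. Unset Strict Implicit. Unset Printing Implicit Defensive.
Import Order.TTheory GRing.Theory Num.Theory.
Import numFieldNormedType.Exports.
Local Open Scope classical_set_scope.
Local Open Scope ring_scope.

(** The forms a_h and l_h only see their arguments at the mesh vertices and at
    the quadrature nodes, and a function of ~V_h is determined on each simplex by
    its vertex values, so the discrete problem is a finite linear system in the
    nodal values.  Such a system is solvable, with unique nodal values, as soon as
    a_h(w, w) = 0 forces the nodal values of w to vanish.  On every simplex of
    ~T_h all the ingredients of a_h are positive: the quadrature weights, the
    cutoff sigma(phi/eps) (its argument has modulus at most arccos(h/eps) < pi/2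
    at the nodes), the interpolated a_0, and the interpolated diffusion matrix,
    which is coercive with constant min(alpha, 1) because A nu = nu and A is
    elliptic on the tangent space.  Hence a_h(w, w) = 0 forces the gradient of w
    to vanish on each simplex and w to vanish at a node, so w vanishes at all
    vertices. *)

Lemma scalar_comb (F : pzRingType) (V : lmodType F) (f : V -> F) : scalar f ->
  forall (I : Type) (r : seq I) (c : I -> F) (x : I -> V),
  f (\sum_(i <- r) c i *: x i) = \sum_(i <- r) c i * f (x i).
Proof.
move=> fL I r c x.
have f0 : f 0 = 0.
  by move: (fL 1 0 0); rewrite scaler0 addr0 mul1r -{1}[f 0]addr0 => /addrI <-.
by elim/big_rec2: _ => // i y1 y2 _ <-; rewrite fL.
Qed.

Lemma linear_comb (F : pzRingType) (V W : lmodType F) (f : V -> W) : linear f ->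
  forall (I : Type) (r : seq I) (c : I -> F) (x : I -> V),
  f (\sum_(i <- r) c i *: x i) = \sum_(i <- r) c i *: f (x i).
Proof.
move=> fL I r c x.
have f0 : f 0 = 0.
  by move: (fL 1 0 0); rewrite scaler0 addr0 scale1r -{1}[f 0]addr0 => /addrI <-.
by elim/big_rec2: _ => // i y1 y2 _ <-; rewrite fL.
Qed.

Lemma scalar_sub (F : pzRingType) (V : lmodType F) (f : V -> F) : scalar f ->
  forall u v, f (u - v) = f u - f v.
Proof. by move=> fL u v; rewrite -scaleN1r addrC fL mulN1r addrC. Qed.

Lemma linear_sub (F : pzRingType) (V W : lmodType F) (f : V -> W) : linear f ->
  forall u v, f (u - v) = f u - f v.
Proof. by move=> fL u v; rewrite -scaleN1r addrC fL scaleN1r addrC. Qed.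

Lemma submx_of_ker (F : fieldType) m (b : 'rV[F]_m) (G : 'M[F]_m) :
  (forall d : 'cV_m, G *m d = 0 -> b *m d = 0) -> (b <= G)%MS.
Proof.
move=> bker; rewrite submxE; apply/eqP/matrixP => i j.
have := bker (cokermx G *m delta_mx j 0); rewrite mulmxA mulmx_coker mul0mx.
by move=> /(_ erefl); rewrite mulmxA -colE => /matrixP/(_ i 0); rewrite !mxE.
Qed.

Lemma scalar_big (F : pzRingType) (V : lmodType F) (I : Type) (r : seq I)
  (g : I -> V -> F) : (forall i, scalar (g i)) -> scalar (fun v => \sum_(i <- r) g i v).
Proof.
move=> gL k u v; rewrite mulr_sumr -big_split.
by apply: eq_bigr => i _; rewrite gL.
Qed.

Lemma scalar_mull (F : comPzRingType) (V : lmodType F) (c : F) (g : V -> F) :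
  scalar g -> scalar (fun v => c * g v).
Proof. by move=> gL k u v; rewrite gL mulrDr mulrCA. Qed.

Lemma convex_comb_ge (R : numDomainType) m (lam x : 'I_m -> R) (c : R) :
  (forall k, 0 <= lam k) -> \sum_k lam k = 1 -> (forall k, c <= x k) ->
  c <= \sum_k lam k * x k.
Proof.
move=> lam_ge0 lam1 cx; rewrite -[c]mul1r -lam1 mulr_suml.
by apply: ler_sum => k _; apply: ler_wpM2l.
Qed.

Section Galerkin.
Variables (F : fieldType) (V : lmodType F) (Vh : V -> Prop).
Hypotheses (Vh0 : Vh 0) (VhD : forall u v, Vh u -> Vh v -> Vh (u + v))
  (VhZ : forall k u, Vh u -> Vh (k *: u)).
Variables (a : V -> V -> F) (l : V -> F) (N : nat) (E : V -> 'rV[F]_N).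
Hypotheses (a_linl : forall w, scalar (a^~ w)) (a_linr : forall u, scalar (a u))
  (l_lin : scalar l) (E_lin : linear E).
Hypothesis E_ker : forall w, Vh w -> E w = 0 -> l w = 0 /\ forall u, Vh u -> a u w = 0.
Hypothesis a_definite : forall w, Vh w -> a w w = 0 -> E w = 0.

Lemma VhB u v : Vh u -> Vh v -> Vh (u - v).
Proof. by move=> Vu Vv; rewrite -scaleN1r; apply: VhD => //; apply: VhZ. Qed.

Lemma Vh_comb m (c : 'I_m -> F) (f : 'I_m -> V) :
  (forall k, Vh (f k)) -> Vh (\sum_k c k *: f k).
Proof. by move=> Vf; elim/big_ind: _ => // k _; apply: VhZ. Qed.

Definition image_mx m (f : 'I_m -> V) : 'M[F]_(m, N) := \matrix_k E (f k).

Lemma exists_spanning_family : exists m (f : 'I_m -> V),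
  (forall k, Vh (f k)) /\ forall v, Vh v -> (E v <= image_mx f)%MS.
Proof.
pose P (r : nat) := `[< exists m (f : 'I_m -> V),
  (forall k, Vh (f k)) /\ \rank (image_mx f) = r >].
have P0 : P 0%N.
  apply/asboolP; exists 0%N, (fun _ => 0); split; first by case.
  by rewrite flatmx0 mxrank0.
have Pmax r : P r -> (r <= N)%N by move=> /asboolP [m [f [_ <-]]]; apply: rank_leq_col.
have [r /asboolP [m [f [Vf rf]]] rmax] := ex_maxnP (ex_intro _ 0%N P0) Pmax.
exists m, f; split => // v Vv.
(* A family of maximal rank spans the image of E, since adding E v keeps the rank. *)
pose g (k : 'I_(1 + m)) := if fintype.split k is inr j then f j else v.
have g_mx : image_mx g = col_mx (E v) (image_mx f).
  apply/matrixP => i j; rewrite !mxE /g.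
  by case: (fintype.split i) => k; rewrite ?mxE ?(ord1 k).
have fg : (image_mx f <= image_mx g)%MS by rewrite g_mx -addsmxE addsmxSr.
have : \rank (image_mx f) == \rank (image_mx g).
  rewrite eqn_leq mxrankS //= rf rmax //; apply/asboolP; exists (1 + m)%N, g.
  by split => // k; rewrite /g; case: (fintype.split k).
by rewrite (mxrank_leqif_sup fg).2 g_mx col_mx_sub => /andP [].
Qed.

Theorem galerkin_exists : exists u, Vh u /\ forall v, Vh v -> a u v = l v.
Proof.
have [m [f [Vf fspan]]] := exists_spanning_family.
pose comb (c : 'rV_m) := \sum_k c 0 k *: f k.
have Vcomb c : Vh (comb c) by apply: Vh_comb.
have E_comb c : E (comb c) = c *m image_mx f.
  by rewrite linear_comb // mulmx_sum_row; apply: eq_bigr => k _; rewrite rowK.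
(* The Gram matrix G may be singular; b is in its row space because ker G is in ker b. *)
pose G : 'M[F]_m := \matrix_(j, k) a (f j) (f k).
pose b : 'rV[F]_m := \row_k l (f k).
have b_ker : forall d : 'cV_m, G *m d = 0 -> b *m d = 0.
  move=> d Gd; have fd j : a (f j) (comb d^T) = 0.
    rewrite scalar_comb //; transitivity ((G *m d) j 0); last by rewrite Gd mxE.
    by rewrite mxE; apply: eq_bigr => k _; rewrite !mxE mulrC.
  have /(a_definite (Vcomb _)) : a (comb d^T) (comb d^T) = 0.
    by rewrite (scalar_comb (a_linl _)) big1 // => k _; rewrite fd mulr0.
  move/(E_ker (Vcomb _)) => [ld _]; apply/matrixP => i j; rewrite !ord1 !mxE -[RHS]ld.
  by rewrite scalar_comb //; apply: eq_bigr => k _; rewrite !mxE mulrC.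
have [c cG] := submxP (submx_of_ker b_ker).
have a_fam k : a (comb c) (f k) = l (f k).
  rewrite (scalar_comb (a_linl _)); transitivity ((c *m G) 0 k); last by rewrite -cG mxE.
  by rewrite mxE; apply: eq_bigr => j _; rewrite mxE.
exists (comb c); split => // v Vv.
have [d Ed] := submxP (fspan v Vv).
have [lv av] : l (v - comb d) = 0 /\ forall u, Vh u -> a u (v - comb d) = 0.
  by apply: E_ker; [apply: VhB | rewrite linear_sub // E_comb Ed subrr].
move/eqP: lv; rewrite scalar_sub // subr_eq0 => /eqP ->.
move/eqP: (av _ (Vcomb c)); rewrite scalar_sub // subr_eq0 => /eqP ->.
by rewrite !scalar_comb //; apply: eq_bigr => k _; rewrite a_fam.
Qed.

Theorem galerkin_unique u1 u2 : Vh u1 -> Vh u2 ->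
  (forall v, Vh v -> a u1 v = l v) -> (forall v, Vh v -> a u2 v = l v) -> E u1 = E u2.
Proof.
move=> Vu1 Vu2 au1 au2; apply/eqP; rewrite -subr_eq0 -linear_sub //; apply/eqP.
apply: a_definite; first exact: VhB.
by rewrite (scalar_sub (a_linl _)) au1 ?au2 ?subrr //; apply: VhB.
Qed.

End Galerkin.

Section EuclideanDot.
Variables (R : realType) (n : nat).
Implicit Types (u v w : pt R n).

Lemma dotvC u v : dotv u v = dotv v u.
Proof. by apply: eq_bigr => i _; rewrite mulrC. Qed.

Lemma dotvDl u v w : dotv (u + v) w = dotv u w + dotv v w.
Proof. by rewrite /dotv -big_split; apply: eq_bigr => i _; rewrite mxE mulrDl. Qed.

Lemma dotvZl (c : R) u w : dotv (c *: u) w = c * dotv u w.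
Proof. by rewrite /dotv mulr_sumr; apply: eq_bigr => i _; rewrite mxE mulrA. Qed.

Lemma dotvDr u v w : dotv w (u + v) = dotv w u + dotv w v.
Proof. by rewrite dotvC dotvDl !(dotvC w). Qed.

Lemma dotvZr (c : R) u w : dotv w (c *: u) = c * dotv w u.
Proof. by rewrite dotvC dotvZl dotvC. Qed.

Lemma dotv0r w : dotv w 0 = 0.
Proof. by rewrite -(scale0r 0) dotvZr mul0r. Qed.

Lemma dotv_linl w : scalar (fun u : pt R n => dotv u w).
Proof. by move=> k u v; rewrite dotvDl dotvZl. Qed.

Lemma dotv_ge0 u : 0 <= dotv u u.
Proof. by apply: sumr_ge0 => i _; rewrite -expr2 sqr_ge0. Qed.

Lemma dotv_eq0 u : dotv u u = 0 -> u = 0.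
Proof.
move=> /eqP; rewrite /dotv psumr_eq0 => [/allP u0|i _]; last by rewrite -expr2 sqr_ge0.
apply/rowP => i; rewrite mxE; apply/eqP; rewrite -sqrf_eq0 expr2.
exact: u0 (mem_index_enum i).
Qed.

Lemma dotv_normalize u : enorm u != 0 ->
  dotv ((enorm u)^-1 *: u) ((enorm u)^-1 *: u) = 1.
Proof.
move=> u0; have uu : dotv u u = enorm u ^+ 2 by rewrite sqr_sqrtr // dotv_ge0.
by rewrite dotvZl dotvZr uu mulrA -expr2 -exprMn mulVf // expr1n.
Qed.

Lemma unit_normal_coercive (M : 'M[R]_(n.+1)) (nu : pt R n) (al : R) :
  dotv nu nu = 1 -> nu *m M = nu ->
  (forall xi, dotv xi nu = 0 -> dotv (xi *m M) nu = 0) ->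
  (forall xi, dotv xi nu = 0 -> al * dotv xi xi <= dotv (xi *m M) xi) ->
  forall g, Num.min al 1 * dotv g g <= dotv (g *m M) g.
Proof.
move=> nu1 nuM M_tan M_ell g.
have [xi [t [xi_nu ->]]] : exists xi t, dotv xi nu = 0 /\ g = xi + t *: nu.
  exists (g - dotv g nu *: nu), (dotv g nu); rewrite subrK; split=> //.
  by rewrite dotvDl -scaleNr dotvZl nu1 mulr1 subrr.
have nu_xi : dotv nu xi = 0 by rewrite dotvC.
have quadM : dotv ((xi + t *: nu) *m M) (xi + t *: nu) = dotv (xi *m M) xi + t ^+ 2.
  rewrite mulmxDl -scalemxAl nuM !dotvDl !dotvDr !dotvZl !dotvZr.
  by rewrite (M_tan _ xi_nu) nu_xi nu1; ring.
have quadI : dotv (xi + t *: nu) (xi + t *: nu) = dotv xi xi + t ^+ 2.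
  by rewrite !dotvDl !dotvDr !dotvZl !dotvZr xi_nu nu_xi nu1; ring.
rewrite quadM quadI mulrDr lerD //.
  apply: le_trans (M_ell _ xi_nu) => //.
  by rewrite ler_wpM2r ?dotv_ge0 // ge_min lexx.
by rewrite -[leRHS]mul1r ler_wpM2r ?sqr_ge0 // ge_min lexx orbT.
Qed.

Lemma normal_eigen_coercive (M : 'M[R]_(n.+1)) (G : pt R n) (al : R) :
  let nu := (enorm G)^-1 *: G in
  0 < enorm G -> nu *m M = nu ->
  (forall xi, dotv xi G = 0 -> dotv (xi *m M) nu = 0) ->
  (forall xi, dotv xi G = 0 -> al * dotv xi xi <= dotv (xi *m M) xi) ->
  forall g, Num.min al 1 * dotv g g <= dotv (g *m M) g.
Proof.
move=> nu G_gt0 nuM M_tan M_ell; have G0 : enorm G != 0 by rewrite gt_eqF.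
have tanG xi : dotv xi nu = 0 -> dotv xi G = 0.
  by move/eqP; rewrite dotvZr mulf_eq0 invr_eq0 (negbTE G0) => /eqP.
apply: (unit_normal_coercive (dotv_normalize G0) nuM).
  by move=> xi /tanG; apply: M_tan.
by move=> xi /tanG; apply: M_ell.
Qed.

End EuclideanDot.

Section Simplex.
Variables (R : realType) (n : nat) (T : simplex R n).

Lemma agrad_linear : linear (agrad T).
Proof.
move=> c f g; rewrite /agrad.
have -> : \col_i ((c *: f + g) (lift ord0 i) - (c *: f + g) ord0) =
    c *: \col_i (f (lift ord0 i) - f ord0) + \col_i (g (lift ord0 i) - g ord0) :> 'cV_n.+1.
  (* On R, [c *: x] is [c * x] only up to conversion, which [ring] does not see. *)
  by apply/matrixP => i j; rewrite !mxE !fctE -![c *: _]/(c * _); ring.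
by rewrite mulmxDr -scalemxAr linearD linearZ.
Qed.

Lemma agrad_vert0 vals : (forall k, vals k = 0) -> agrad T vals = 0.
Proof.
move=> vals0; rewrite /agrad (_ : \col_i _ = 0) ?mulmx0 ?trmx0 //.
by apply/matrixP => i j; rewrite !mxE !vals0 subrr.
Qed.

Lemma agrad_eq0 vals : nondeg T -> agrad T vals = 0 -> forall k, vals k = vals ord0.
Proof.
move=> T_nd /(congr1 trmx); rewrite trmxK trmx0 => grad0.
have T_unit : edges T \in unitmx by rewrite unitmxE unitfE.
have col0 : \col_i (vals (lift ord0 i) - vals ord0) = 0 :> 'cV_n.+1.
  by rewrite -(mulKVmx T_unit (\col_i _)) grad0 mulmx0.
move=> k; case: (unliftP ord0 k) => [i ->|-> //].
by have /matrixP/(_ i 0)/eqP := col0; rewrite !mxE subr_eq0 => /eqP.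
Qed.

Lemma bary_convex (b : pt R n) : ref_simplex b ->
  (forall k, 0 <= bary b 0 k) /\ \sum_k bary b 0 k = 1.
Proof.
case=> b_ge0 b_le1; split.
  by move=> k; rewrite mxE; case: (unliftP ord0 k) => [j _|_]; rewrite ?subr_ge0.
rewrite big_ord_recl mxE unlift_none.
under [X in _ + X = _]eq_bigr => i _ do rewrite mxE liftK.
by rewrite subrK.
Qed.

Lemma qpoint_in_hull (b : pt R n) : ref_simplex b -> shull T (qpoint T b).
Proof. by move=> /bary_convex [b_ge0 b1]; exists (bary b). Qed.

Lemma vert_in_hull k : shull T (vert T k).
Proof.
exists (delta_mx 0 k); split; [|split].
- by move=> j; rewrite mxE ler0n.
- by rewrite (bigD1 k) //= big1 ?addr0 ?mxE ?eqxx // => j /negbTE jk; rewrite mxE jk andbF.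
- by rewrite -rowE.
Qed.

Lemma affine_on0 : affine_on T 0.
Proof. by move=> lam _ _; rewrite big1 // => k _; rewrite mulr0. Qed.

Lemma affine_onD u v : affine_on T u -> affine_on T v -> affine_on T (u + v).
Proof.
move=> uA vA lam lam0 lam1; rewrite !fctE uA // vA // -big_split.
by apply: eq_bigr => k _; rewrite mulrDr.
Qed.

Lemma affine_onZ c u : affine_on T u -> affine_on T (c *: u).
Proof.
move=> uA lam lam0 lam1; rewrite !fctE uA // -[c *: _]/(c * _) mulr_sumr.
by apply: eq_bigr => k _; rewrite mulrCA.
Qed.

Lemma affine_on_vert_const w c x : affine_on T w -> (forall k, w (vert T k) = c) ->
  shull T x -> w x = c.
Proof.
move=> wA wc [lam [lam0 [lam1 ->]]]; rewrite wA //.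
by under eq_bigr do rewrite wc; rewrite -mulr_suml lam1 mul1r.
Qed.

End Simplex.

Section DiscreteProblem.
Variables (R : realType) (n q L : nat) (omega : 'I_L -> R) (bh : 'I_L -> pt R n)
  (eps : R) (phi : pt R n -> R) (Ahat : pt R n -> 'M[R]_(n.+1))
  (a0hat fhat : pt R n -> R) (Tt : seq (simplex R n)).

Local Notation V := (pt R n -> R).
Local Notation a := (ah q omega bh eps phi Ahat a0hat Tt).
Local Notation l := (lh q omega bh eps phi fhat Tt).

(* At the quadrature node b_{i,T} = qnode T i: interp_at is the interpolant I_h,
   cutoff is rho, and qweight is eps^-1 |T| omega_i |grad I_h phi|. *)
Definition qnode T i := qpoint T (bh i).
Definition interp_at T i (g : V) := \sum_k bary (bh i) 0 k * g (vert T k).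
Definition interpA_at T i := \sum_k bary (bh i) 0 k *: Ahat (vert T k).
Definition cutoff T i := sigma q (phi (qnode T i) / eps).
Definition pgrad T (v : V) := agrad T (fun k => v (vert T k)).
Definition qweight T i := eps^-1 * (svol T * omega i * enorm (pgrad T phi)).

Definition a_integrand T i (v1 v2 : V) :=
  cutoff T i * dotv (pgrad T v1 *m (interpA_at T i)^T) (pgrad T v2)
  + cutoff T i * interp_at T i a0hat * v1 (qnode T i) * v2 (qnode T i).

Definition l_integrand T i (v : V) := cutoff T i * interp_at T i fhat * v (qnode T i).

Lemma ahE v1 v2 : a v1 v2 = \sum_(T <- Tt) \sum_(i < L) qweight T i * a_integrand T i v1 v2.
Proof.
rewrite /ah mulr_sumr; apply: eq_bigr => T _.
rewrite mulr_sumr mulr_suml mulr_sumr; apply: eq_bigr => i _.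
by rewrite /qweight /a_integrand /cutoff /qnode /interpA_at /interp_at /pgrad /=; ring.
Qed.

Lemma lhE v : l v = \sum_(T <- Tt) \sum_(i < L) qweight T i * l_integrand T i v.
Proof.
rewrite /lh mulr_sumr; apply: eq_bigr => T _.
rewrite mulr_sumr mulr_suml mulr_sumr; apply: eq_bigr => i _.
by rewrite /qweight /l_integrand /cutoff /qnode /interp_at /pgrad /=; ring.
Qed.

Lemma pgrad_linear T : linear (pgrad T).
Proof. by move=> c u v; apply: agrad_linear. Qed.

Lemma a_integrand_linl T i w : scalar (fun v : V => a_integrand T i v w).
Proof.
move=> c u v; rewrite /a_integrand pgrad_linear mulmxDl -scalemxAl dotvDl dotvZl !fctE.
by rewrite -![c *: _]/(c * _); ring.
Qed.

Lemma a_integrand_linr T i u : scalar (a_integrand T i u).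
Proof.
move=> c v w; rewrite /a_integrand pgrad_linear dotvDr dotvZr !fctE.
by rewrite -![c *: _]/(c * _); ring.
Qed.

Lemma l_integrand_lin T i : scalar (l_integrand T i).
Proof. by move=> c u v; rewrite /l_integrand !fctE -![c *: _]/(c * _); ring. Qed.

Lemma ah_linl w : scalar (fun v : V => a v w).
Proof.
rewrite (_ : (fun v => a v w) =
    fun v => \sum_(T <- Tt) \sum_(i < L) qweight T i * a_integrand T i v w).
  by apply: scalar_big => T; apply: scalar_big => i; apply/scalar_mull/a_integrand_linl.
by apply/funext => v; rewrite ahE.
Qed.

Lemma ah_linr u : scalar (a u).
Proof.
rewrite (_ : a u =
    fun v => \sum_(T <- Tt) \sum_(i < L) qweight T i * a_integrand T i u v).
  by apply: scalar_big => T; apply: scalar_big => i; apply/scalar_mull/a_integrand_linr.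
by apply/funext => v; rewrite ahE.
Qed.

Lemma lh_lin : scalar l.
Proof.
rewrite (_ : l =
    fun v => \sum_(T <- Tt) \sum_(i < L) qweight T i * l_integrand T i v).
  by apply: scalar_big => T; apply: scalar_big => i; apply/scalar_mull/l_integrand_lin.
by apply/funext => v; rewrite lhE.
Qed.

Definition nodal_values (v : V) : 'rV[R]_(size Tt * n.+2) :=
  mxvec (\matrix_(j < size Tt, k < n.+2) v (vert (nth 0 Tt j) k)).

Lemma nodal_values_linear : linear nodal_values.
Proof.
move=> c u v; rewrite /nodal_values -linearP; congr mxvec.
by apply/matrixP => j k; rewrite !mxE.
Qed.

Lemma nodal_values_eq0 v :
  nodal_values v = 0 <-> forall T, T \in Tt -> forall k, v (vert T k) = 0.
Proof.
split=> [/eqP | v0]; last first.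
  by apply/eqP; rewrite mxvec_eq0; apply/eqP/matrixP => j k; rewrite !mxE v0 ?mem_nth.
rewrite mxvec_eq0 => /eqP/matrixP v0 T TT k.
have jT : (index T Tt < size Tt)%N by rewrite index_mem.
by have := v0 (Ordinal jT) k; rewrite !mxE /= nth_index.
Qed.

Lemma inVh0 : inVh Tt 0.
Proof. by move=> T _; apply: affine_on0. Qed.

Lemma inVhD u v : inVh Tt u -> inVh Tt v -> inVh Tt (u + v).
Proof. by move=> Vu Vv T TT; apply: affine_onD; [apply: Vu | apply: Vv]. Qed.

Lemma inVhZ c u : inVh Tt u -> inVh Tt (c *: u).
Proof. by move=> Vu T TT; apply/affine_onZ/Vu. Qed.

Hypothesis bh_ref : forall i, ref_simplex (bh i).

Lemma qnode_vert0 w T i : inVh Tt w -> T \in Tt -> (forall k, w (vert T k) = 0) ->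
  w (qnode T i) = 0.
Proof.
by move=> Vw TT w0; apply: (affine_on_vert_const (Vw T TT) w0); apply: qpoint_in_hull.
Qed.

Lemma nodal_kernel w : inVh Tt w -> nodal_values w = 0 ->
  l w = 0 /\ forall u, a u w = 0.
Proof.
move=> Vw /nodal_values_eq0 w0; split=> [|u].
  rewrite lhE big1_seq // => T /andP [_ TT]; rewrite big1 // => i _.
  by rewrite /l_integrand (qnode_vert0 _ Vw TT (w0 T TT)) !mulr0.
rewrite ahE big1_seq // => T /andP [_ TT]; rewrite big1 // => i _.
rewrite /a_integrand (_ : pgrad T w = 0); last exact: agrad_vert0 (w0 T TT).
by rewrite dotv0r (qnode_vert0 _ Vw TT (w0 T TT)) !(mulr0, addr0).
Qed.

Hypotheses (L_gt0 : (0 < L)%N) (Tt_nondeg : forall T, T \in Tt -> nondeg T)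
  (eps_gt0 : 0 < eps) (omega_gt0 : forall i, 0 < omega i)
  (pgrad_phi_gt0 : forall T, T \in Tt -> 0 < enorm (pgrad T phi))
  (cutoff_gt0 : forall T i, T \in Tt -> 0 < cutoff T i).
Variables (beta alpha0 : R).
Hypotheses (beta_gt0 : 0 < beta) (alpha0_gt0 : 0 < alpha0)
  (Ahat_coercive : forall T k g, T \in Tt ->
     beta * dotv g g <= dotv (g *m (Ahat (vert T k))^T) g)
  (a0hat_ge : forall T k, T \in Tt -> alpha0 <= a0hat (vert T k)).

Lemma qweight_gt0 T i : T \in Tt -> 0 < qweight T i.
Proof.
move=> TT; rewrite /qweight !mulr_gt0 ?invr_gt0 ?pgrad_phi_gt0 //.
by rewrite normr_gt0; apply: Tt_nondeg.
Qed.

Lemma interp_a0_gt0 T i : T \in Tt -> 0 < interp_at T i a0hat.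
Proof.
move=> TT; have [lam_ge0 lam1] := bary_convex (bh_ref i).
by apply: lt_le_trans alpha0_gt0 _; apply: convex_comb_ge => // k; apply: a0hat_ge.
Qed.

Lemma interpA_coercive T i g : T \in Tt ->
  beta * dotv g g <= dotv (g *m (interpA_at T i)^T) g.
Proof.
move=> TT; have [lam_ge0 lam1] := bary_convex (bh_ref i).
rewrite /interpA_at linear_sum mulmx_sumr.
under eq_bigr do rewrite linearZ /= -scalemxAr.
by rewrite (scalar_comb (dotv_linl g)); apply: convex_comb_ge => // k; apply: Ahat_coercive.
Qed.

Lemma a_integrand_terms_ge0 T i w : T \in Tt ->
  0 <= cutoff T i * dotv (pgrad T w *m (interpA_at T i)^T) (pgrad T w) /\
  0 <= cutoff T i * interp_at T i a0hat * w (qnode T i) * w (qnode T i).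
Proof.
move=> TT; have c_gt0 := cutoff_gt0 i TT; split.
  apply: mulr_ge0; first exact: ltW.
  by apply: le_trans (interpA_coercive i _ TT); rewrite mulr_ge0 ?dotv_ge0 ?ltW.
by rewrite -mulrA -expr2 mulr_ge0 ?sqr_ge0 ?mulr_ge0 ?ltW ?interp_a0_gt0.
Qed.

Lemma a_integrand_ge0 T i w : T \in Tt -> 0 <= a_integrand T i w w.
Proof. by move=> /(a_integrand_terms_ge0 i w) [? ?]; apply: addr_ge0. Qed.

Lemma a_integrand_eq0 T i w : T \in Tt -> a_integrand T i w w = 0 ->
  pgrad T w = 0 /\ w (qnode T i) = 0.
Proof.
move=> TT; have [grad_ge0 node_ge0] := a_integrand_terms_ge0 i w TT.
have c_neq0 : cutoff T i != 0 by rewrite gt_eqF ?cutoff_gt0.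
rewrite /a_integrand => /eqP; rewrite paddr_eq0 // => /andP [grad0 node0]; split.
  move: grad0; rewrite mulf_eq0 (negbTE c_neq0) /= => /eqP grad0.
  have := interpA_coercive i (pgrad T w) TT; rewrite grad0 pmulr_rle0 // => gg.
  by apply: dotv_eq0; apply/le_anti; rewrite gg dotv_ge0.
move: node0; rewrite -mulrA mulf_eq0 mulf_eq0 (negbTE c_neq0) gt_eqF ?interp_a0_gt0 //=.
by rewrite mulf_eq0 orbb => /eqP.
Qed.

Lemma ah_definite w : inVh Tt w -> a w w = 0 -> nodal_values w = 0.
Proof.
move=> Vw; rewrite ahE => /eqP aww0; apply/nodal_values_eq0 => T TT.
have term_ge0 T' i : T' \in Tt -> 0 <= qweight T' i * a_integrand T' i w w.
  by move=> TT'; apply: mulr_ge0; [apply/ltW/qweight_gt0 | apply: a_integrand_ge0].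
move: aww0; rewrite big_seq psumr_eq0 => [/allP/(_ T TT)|T' TT']; last first.
  by apply: sumr_ge0 => i _; apply: term_ge0.
rewrite TT /= psumr_eq0 => [/allP/(_ (Ordinal L_gt0) (mem_index_enum _)) /=|i _]; last first.
  exact: term_ge0.
rewrite mulf_eq0 gt_eqF ?qweight_gt0 //= => /eqP /(a_integrand_eq0 TT) [grad0 node0].
have vert_eq := agrad_eq0 (Tt_nondeg TT) grad0.
have w0 : w (vert T ord0) = 0.
  rewrite -node0; symmetry; apply: (affine_on_vert_const (Vw T TT) vert_eq).
  exact: qpoint_in_hull.
by move=> k; rewrite vert_eq.
Qed.

Theorem discrete_problem_well_posed :
  (exists u, inVh Tt u /\ forall v, inVh Tt v -> a u v = l v) /\
  (forall u1 u2, inVh Tt u1 -> inVh Tt u2 ->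
     (forall v, inVh Tt v -> a u1 v = l v) -> (forall v, inVh Tt v -> a u2 v = l v) ->
     forall x, Dh Tt x -> u1 x = u2 x).
Proof.
have kernel w : inVh Tt w -> nodal_values w = 0 ->
    l w = 0 /\ forall u, inVh Tt u -> a u w = 0.
  by move=> Vw /(nodal_kernel Vw) [lw aw]; split=> // u _.
split; first exact: (galerkin_exists inVh0 inVhD inVhZ ah_linl ah_linr lh_lin
  nodal_values_linear kernel ah_definite).
move=> u1 u2 Vu1 Vu2 au1 au2 x [T TT xT].
have /eqP := galerkin_unique inVhD inVhZ ah_linl nodal_values_linear ah_definite
  Vu1 Vu2 au1 au2.
rewrite -subr_eq0 -(linear_sub nodal_values_linear) => /eqP /nodal_values_eq0 w0.
apply/eqP; rewrite -subr_eq0; apply/eqP.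
exact: (affine_on_vert_const (VhB inVhD inVhZ Vu1 Vu2 T TT) (w0 T TT) xT).
Qed.

End DiscreteProblem.

Lemma acos_lt_pihalf (R : realType) (x : R) : 0 < x <= 1 -> acos x < pi / 2.
Proof.
move=> /andP [x_gt0 x_le1].
have x_in : -1 <= x <= 1 by rewrite x_le1 andbT (le_trans _ (ltW x_gt0)) // lerN10.
have pi_gt0 : (0 : R) < pi := pi_gt0 R.
rewrite -ltr_cos ?acosK ?cos_pihalf //; rewrite in_itv /=.
  by rewrite acos_ge0 // acos_lepi.
by rewrite divr_ge0 ?ltW //= ltr_pdivrMr // ltr_pMr // ltr1n.
Qed.

Lemma sigma_gt0_in_band (R : realType) q (eps h x : R) : 0 < h -> h < eps ->
  `|x| <= eps * acos (h / eps) -> 0 < sigma q (x / eps).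
Proof.
move=> h_gt0 h_lt_eps x_band; have eps_gt0 := lt_trans h_gt0 h_lt_eps.
have x_lt : `|x / eps| < pi / 2.
  rewrite normrM normfV (gtr0_norm eps_gt0) ltr_pdivrMr // mulrC.
  apply: le_lt_trans x_band _; rewrite ltr_pM2l // acos_lt_pihalf //.
  by rewrite divr_gt0 //= ler_pdivrMr // mul1r ltW.
by rewrite /sigma ltW // exprn_gt0 // cos_gt0_pihalf // -ltr_norml.
Qed.

Theorem mainTheorem2
  (R : realType) (n : nat) (Hn : n = 1%N \/ n = 2%N)
  (* domain, level set function, hypersurface *)
  (Omega : set (pt R n)) (phi : pt R n -> R) (c0 c1 : R) (Gamma : set (pt R n))
  (HOopen : open Omega) (HObdd : bounded_set Omega)
  (HGamma : Gamma = [set x | closure Omega x /\ phi x = 0])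
  (HGsub : Gamma `<=` Omega) (HGne : Gamma !=set0) (HGconn : connected Gamma)
  (Hphi : exists U : set (pt R n), open U /\ closure Omega `<=` U /\ smooth_on U phi)
  (Hc0 : 0 < c0) (Hc01 : c0 <= c1)
  (Hgrad : forall x, closure Omega x ->
     c0 <= enorm (grad phi x) /\ enorm (grad phi x) <= c1)
  (* closest point projection, defined on closure Omega *)
  (phat : pt R n -> pt R n)
  (Hphat : forall x, closure Omega x ->
     Gamma (phat x) /\
     (forall y, Gamma y -> enorm (x - phat x) <= enorm (x - y)) /\
     (forall y, Gamma y -> enorm (x - y) <= enorm (x - phat x) -> y = phat x))
  (* coefficients; nu = grad phi / |grad phi| (the sign of nu is irrelevant) *)
  (A : pt R n -> 'M[R]_(n.+1)) (a0 f : pt R n -> R) (alpha alpha0 : R)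
  (HAreg : forall i j, Ck_on_set 2 Gamma (fun x => A x i j))
  (HAsym : forall x, Gamma x -> (A x)^T = A x)
  (HAtan : forall x, Gamma x -> forall xi : pt R n, dotv xi (grad phi x) = 0 ->
     dotv (xi *m A x) ((enorm (grad phi x))^-1 *: grad phi x) = 0)
  (Halpha : 0 < alpha)
  (HAell : forall x, Gamma x -> forall xi : pt R n, dotv xi (grad phi x) = 0 ->
     dotv (xi *m A x) xi >= alpha * dotv xi xi)
  (HAnu : forall x, Gamma x ->
     ((enorm (grad phi x))^-1 *: grad phi x) *m (A x)^T
       = (enorm (grad phi x))^-1 *: grad phi x)
  (Ha0reg : lipschitz_set Gamma a0) (Hfreg : lipschitz_set Gamma f)
  (Halpha0 : 0 < alpha0) (Ha0 : forall x, Gamma x -> alpha0 <= a0 x)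
  (* delta and the flow gamma_p *)
  (delta : R) (gamma : pt R n -> R -> pt R n)
  (Hdelta : 0 < delta)
  (Hflow : forall p, Gamma p ->
     let F := fun y : pt R n =>
       (dotv (grad phi y *m (A p)^T) (grad phi y))^-1 *: (grad phi y *m (A p)^T) in
     gamma p 0 = p /\
     (forall s, `|s| < delta -> derivable (gamma p) s 1 /\
                 'D_1 (gamma p) s = F (gamma p s)) /\
     (forall y : R -> pt R n, y 0 = p ->
        (forall s, `|s| < delta -> derivable y s 1 /\ 'D_1 y s = F (y s)) ->
        forall s, `|s| < delta -> y s = gamma p s))
  (Hbij : (forall p s, Gamma p -> `|s| < delta ->
             Omega (gamma p s) /\ `|phi (gamma p s)| < delta) /\
          (forall p s p' s', Gamma p -> `|s| < delta -> Gamma p' -> `|s'| < delta ->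
             gamma p s = gamma p' s' -> p = p' /\ s = s') /\
          (forall x, Omega x -> `|phi x| < delta ->
             exists p s, Gamma p /\ `|s| < delta /\ gamma p s = x))
  (* quadrature rule *)
  (q L : nat) (omega : 'I_L -> R) (bh : 'I_L -> pt R n)
  (Homega : forall i, 0 < omega i) (Homega1 : \sum_(i < L) omega i = 1)
  (Hbh : forall i, ref_simplex (bh i))
  (Hexact : quad_exact q omega bh)
  (* family of regular meshes and h0 *)
  (Th : R -> seq (simplex R n)) (h0 : R) (Hh0 : 0 < h0)
  (Hmesh : forall h, 0 < h <= h0 ->
     partition_of (closure Omega) (Th h) /\ meshsize (Th h) = h)
  (Hregular : exists kappa : R, 0 < kappa /\ forall h, 0 < h <= h0 ->
     forall T, T \in Th h -> sdiam T ^+ n.+1 <= kappa * svol T)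
  (HIhphi : forall h, 0 < h <= h0 -> forall T, T \in Th h ->
     c0 / 2 <= enorm (agrad T (fun k => phi (vert T k))) /\
     enorm (agrad T (fun k => phi (vert T k))) <= 2 * c1) :
  forall eps h : R, 0 < h -> h < eps -> h <= h0 -> (pi / 2 + c1) * eps < delta ->
    let Tt := Ttilde eps h phi bh (Th h) in
    let a := ah q omega bh eps phi (A \o phat) (a0 \o phat) Tt in
    let l := lh q omega bh eps phi (f \o phat) Tt in
    (exists u, inVh Tt u /\ forall v, inVh Tt v -> a u v = l v) /\
    (forall u1 u2, inVh Tt u1 -> inVh Tt u2 ->
       (forall v, inVh Tt v -> a u1 v = l v) ->
       (forall v, inVh Tt v -> a u2 v = l v) ->
       forall x, Dh Tt x -> u1 x = u2 x).
Proof.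
move=> eps h h_gt0 h_lt_eps h_le_h0 _ Tt a l.
have hh : 0 < h <= h0 by rewrite h_gt0.
have [[Th_nondeg [Th_cover _]] _] := Hmesh h hh.
have TtTh T : T \in Tt -> T \in Th h by rewrite mem_filter => /andP [].
have vert_Gamma T k : T \in Tt -> Gamma (phat (vert T k)).
  move=> TT; apply: (Hphat _ _).1; apply/Th_cover.
  by exists T; [apply: TtTh | apply: vert_in_hull].
have A_coercive p g : Gamma p -> Num.min alpha 1 * dotv g g <= dotv (g *m (A p)^T) g.
  move=> Gp; have Op : closure Omega p by move: Gp; rewrite HGamma => -[].
  rewrite HAsym //; apply: normal_eigen_coercive (HAtan p Gp) (HAell p Gp) g.
    exact: lt_le_trans Hc0 (Hgrad p Op).1.
  by rewrite -[in LHS](HAsym p Gp) HAnu.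
have L_gt0 : (0 < L)%N.
  rewrite lt0n; apply/eqP => L0; move/eqP: Homega1.
  rewrite big1 => [|[i i_lt] _]; first by rewrite eq_sym oner_eq0.
  by exfalso; move: i_lt; rewrite L0.
apply: (discrete_problem_well_posed (f \o phat) Hbh L_gt0 _ (lt_trans h_gt0 h_lt_eps)
  Homega _ _ (beta := Num.min alpha 1) _ Halpha0).
- by move=> T /TtTh /Th_nondeg.
- by move=> T /TtTh TT; apply: lt_le_trans (HIhphi h hh T TT).1; rewrite divr_gt0.
- move=> T i; rewrite mem_filter => /andP [/forallP /(_ i) T_band _].
  exact: sigma_gt0_in_band T_band.
- by rewrite lt_min Halpha ltr01.
- by move=> T k g /(vert_Gamma T k) /A_coercive.
- by move=> T k /(vert_Gamma T k) /Ha0.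
Qed.
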